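(* Every morphism of bigroupoids $(F,\phi):\mathcal A\to\mathcal C$ factors as $(F,\phi)=(H,\eta)\circ(G,\gamma)$ with $(G,\gamma):\mathcal A\to\mathcal B$ a cofibration and $(H,\eta):\mathcal B\to\mathcal C$ a strict morphism (i.e. $\eta$ is the identity) which is a trivial fibration.
   Context: A bigroupoid $\mathcal B$ consists of: a set $\mathcal B_0$ of 0-cells; for each $A,B\in\mathcal B_0$ a groupoid $\mathcal B(A,B)$ whose objects are 1-cells and whose arrows are 2-cells; composition functors $*$; identity 1-cells $1_A$; inversion functors $(-)^*:\mathcal B(A,B)\to\mathcal B(B,A)$; and natural isomorphisms $\mathbf a:(h*g)*f\Rightarrow h*(g*f)$, $\mathbf l:1_B*f\Rightarrow f$, $\mathbf r:f*1_A\Rightarrow f$, $\mathbf e:f^**f\Rightarrow 1_A$, $\mathbf i:1_B\Rightarrow f*f^*$, such that the pentagon for $\mathbf a$ commutes, $(\mathrm{id}*\mathbf l)\circ\mathbf a=\mathbf r*\mathrm{id}$, and $\mathbf r_f\circ(\mathrm{id}*\mathbf e_f)\circ\mathbf a\circ(\mathbf i_f*\mathrm{id})=\mathbf l_f$. A morphism $(F,\phi):\mathcal A\to\mathcal B$ consists of a function on 0-cells, functors $F_{A,A'}:\mathcal A(A,A')\to\mathcal B(FA,FA')$ and natural isomorphisms $\phi_{g,f}:Fg*Ff\Rightarrow F(g*f)$, $\phi_A:1_{FA}\Rightarrow F1_A$, $\phi_f:(Ff)^*\Rightarrow F(f^* )$ satisfying $F\mathbf a\circ\phi\circ(\phi*\mathrm{id})=\phi\circ(\mathrm{id}*\phi)\circ\mathbf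 a$, $F\mathbf r\circ\phi\circ(\mathrm{id}*\phi_A)=\mathbf r$, $F\mathbf l\circ\phi\circ(\phi_B*\mathrm{id})=\mathbf l$, $F\mathbf e\circ\phi\circ(\phi_f*\mathrm{id})=\phi_A\circ\mathbf e$, $F\mathbf i\circ\phi_B=\phi\circ(\mathrm{id}*\phi_f)\circ\mathbf i$; it is strict if all components of $\phi$ are identities; composition is $(G,\gamma)\circ(F,\phi)=(GF,G\phi\circ\gamma F)$. Fibration: (1) for every 0-cell $A'$ of $\mathcal A$ and 1-cell $b:B\to FA'$ there is $a:A\to A'$ with $FA=B$, $Fa=b$; (2) for every 1-cell $a'$ and 2-cell $\beta:b\Rightarrow Fa'$ there is $\alpha:a\Rightarrow a'$ with $Fa=b$, $F\alpha=\beta$. Cofibration: injective on 0-cells and each $F_{A,A'}$ injective on objects. Weak equivalence: every 0-cell $B$ of $\mathcal B$ admits a 1-cell $B\to FA'$ for some 0-cell $A'$, and each $F_{A,A'}$ is an equivalence of categories. A trivial fibration is a fibration that is a weak equivalence. *)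

Record Bigroupoid := {
  ob : Type;
  hom : ob -> ob -> Type;
  cell : forall {a b : ob}, hom a b -> hom a b -> Type;

  vid : forall {a b : ob} (f : hom a b), cell f f;
  vcomp : forall {a b : ob} {f g h : hom a b}, cell g h -> cell f g -> cell f h;
  vinv : forall {a b : ob} {f g : hom a b}, cell f g -> cell g f;
  vcomp_assoc : forall (a b : ob) (f g h k : hom a b)
      (x : cell h k) (y : cell g h) (z : cell f g),
      vcomp x (vcomp y z) = vcomp (vcomp x y) z;
  vcomp_id_l : forall (a b : ob) (f g : hom a b) (x : cell f g), vcomp (vid g) x = x;
  vcomp_id_r : forall (a b : ob) (f g : hom a b) (x : cell f g), vcomp x (vid f) = x;
  vinv_l : forall (a b : ob) (f g : hom a b) (x : cell f g), vcomp (vinv x) x = vid f;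
  vinv_r : forall (a b : ob) (f g : hom a b) (x : cell f g), vcomp x (vinv x) = vid g;

  hc : forall {a b c : ob}, hom b c -> hom a b -> hom a c;
  hc2 : forall {a b c : ob} {g g' : hom b c} {f f' : hom a b},
      cell g g' -> cell f f' -> cell (hc g f) (hc g' f');
  hc2_id : forall (a b c : ob) (g : hom b c) (f : hom a b),
      hc2 (vid g) (vid f) = vid (hc g f);
  hc2_comp : forall (a b c : ob) (g g' g'' : hom b c) (f f' f'' : hom a b)
      (y' : cell g' g'') (y : cell g g') (x' : cell f' f'') (x : cell f f'),
      hc2 (vcomp y' y) (vcomp x' x) = vcomp (hc2 y' x') (hc2 y x);

  one : forall a : ob, hom a a;

  inv : forall {a b : ob}, hom a b -> hom b a;
  inv2 : forall {a b : ob} {f g : hom a b}, cell f g -> cell (inv f) (inv g);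
  inv2_id : forall (a b : ob) (f : hom a b), inv2 (vid f) = vid (inv f);
  inv2_comp : forall (a b : ob) (f g h : hom a b) (y : cell g h) (x : cell f g),
      inv2 (vcomp y x) = vcomp (inv2 y) (inv2 x);

  assoc : forall {a b c d : ob} (h : hom c d) (g : hom b c) (f : hom a b),
      cell (hc (hc h g) f) (hc h (hc g f));
  assoc_nat : forall (a b c d : ob) (h h' : hom c d) (g g' : hom b c) (f f' : hom a b)
      (z : cell h h') (y : cell g g') (x : cell f f'),
      vcomp (assoc h' g' f') (hc2 (hc2 z y) x) = vcomp (hc2 z (hc2 y x)) (assoc h g f);

  lu : forall {a b : ob} (f : hom a b), cell (hc (one b) f) f;
  lu_nat : forall (a b : ob) (f f' : hom a b) (x : cell f f'),
      vcomp (lu f') (hc2 (vid (one b)) x) = vcomp x (lu f);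

  ru : forall {a b : ob} (f : hom a b), cell (hc f (one a)) f;
  ru_nat : forall (a b : ob) (f f' : hom a b) (x : cell f f'),
      vcomp (ru f') (hc2 x (vid (one a))) = vcomp x (ru f);

  ev : forall {a b : ob} (f : hom a b), cell (hc (inv f) f) (one a);
  ev_nat : forall (a b : ob) (f f' : hom a b) (x : cell f f'),
      vcomp (ev f') (hc2 (inv2 x) x) = vcomp (vid (one a)) (ev f);

  co : forall {a b : ob} (f : hom a b), cell (one b) (hc f (inv f));
  co_nat : forall (a b : ob) (f f' : hom a b) (x : cell f f'),
      vcomp (hc2 x (inv2 x)) (co f) = vcomp (co f') (vid (one b));

  pentagon : forall (a b c d e : ob) (k : hom d e) (h : hom c d) (g : hom b c) (f : hom a b),
      vcomp (assoc k h (hc g f)) (assoc (hc k h) g f)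
      = vcomp (hc2 (vid k) (assoc h g f))
          (vcomp (assoc k (hc h g) f) (hc2 (assoc k h g) (vid f)));

  triangle : forall (a b c : ob) (g : hom b c) (f : hom a b),
      vcomp (hc2 (vid g) (lu f)) (assoc g (one b) f) = hc2 (ru g) (vid f);

  zigzag : forall (a b : ob) (f : hom a b),
      vcomp (ru f)
        (vcomp (hc2 (vid f) (ev f))
           (vcomp (assoc f (inv f) f) (hc2 (co f) (vid f))))
      = lu f
}.

Arguments ob B : rename.
Arguments hom {B} a b : rename.
Arguments cell {B a b} f g : rename.
Arguments vid {B a b} f : rename.
Arguments vcomp {B a b f g h} _ _ : rename.
Arguments vinv {B a b f g} _ : rename.
Arguments hc {B a b c} _ _ : rename.
Arguments hc2 {B a b c g g' f f'} _ _ : rename.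
Arguments one {B} a : rename.
Arguments inv {B a b} _ : rename.
Arguments inv2 {B a b f g} _ : rename.
Arguments assoc {B a b c d} h g f : rename.
Arguments lu {B a b} f : rename.
Arguments ru {B a b} f : rename.
Arguments ev {B a b} f : rename.
Arguments co {B a b} f : rename.

Record MorData (A B : Bigroupoid) := {
  F0 : ob A -> ob B;
  F1 : forall {a a' : ob A}, hom a a' -> hom (F0 a) (F0 a');
  F2 : forall {a a' : ob A} {f g : hom a a'}, cell f g -> cell (F1 f) (F1 g);
  phic : forall {a b c : ob A} (g : hom b c) (f : hom a b),
      cell (hc (F1 g) (F1 f)) (F1 (hc g f));
  phiu : forall a : ob A, cell (one (F0 a)) (F1 (one a));
  phii : forall {a b : ob A} (f : hom a b), cell (inv (F1 f)) (F1 (inv f))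
}.

Arguments F0 {A B} M a : rename.
Arguments F1 {A B} M {a a'} f : rename.
Arguments F2 {A B} M {a a' f g} x : rename.
Arguments phic {A B} M {a b c} g f : rename.
Arguments phiu {A B} M a : rename.
Arguments phii {A B} M {a b} f : rename.

Definition IsMorphism {A B : Bigroupoid} (F : MorData A B) : Prop :=
  (forall (a a' : ob A) (f : hom a a'), F2 F (vid f) = vid (F1 F f)) /\
  (forall (a a' : ob A) (f g h : hom a a') (y : cell g h) (x : cell f g),
      F2 F (vcomp y x) = vcomp (F2 F y) (F2 F x)) /\
  (forall (a b c : ob A) (g g' : hom b c) (f f' : hom a b) (y : cell g g') (x : cell f f'),
      vcomp (F2 F (hc2 y x)) (phic F g f) = vcomp (phic F g' f') (hc2 (F2 F y) (F2 F x))) /\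
  (forall (a b : ob A) (f f' : hom a b) (x : cell f f'),
      vcomp (F2 F (inv2 x)) (phii F f) = vcomp (phii F f') (inv2 (F2 F x))) /\
  (forall (a b c d : ob A) (h : hom c d) (g : hom b c) (f : hom a b),
      vcomp (F2 F (assoc h g f)) (vcomp (phic F (hc h g) f) (hc2 (phic F h g) (vid (F1 F f))))
      = vcomp (phic F h (hc g f)) (vcomp (hc2 (vid (F1 F h)) (phic F g f))
                                     (assoc (F1 F h) (F1 F g) (F1 F f)))) /\
  (forall (a b : ob A) (f : hom a b),
      vcomp (F2 F (ru f)) (vcomp (phic F f (one a)) (hc2 (vid (F1 F f)) (phiu F a)))
      = ru (F1 F f)) /\
  (forall (a b : ob A) (f : hom a b),
      vcomp (F2 F (lu f)) (vcomp (phic F (one b) f) (hc2 (phiu F b) (vid (F1 F f))))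
      = lu (F1 F f)) /\
  (forall (a b : ob A) (f : hom a b),
      vcomp (F2 F (ev f)) (vcomp (phic F (inv f) f) (hc2 (phii F f) (vid (F1 F f))))
      = vcomp (phiu F a) (ev (F1 F f))) /\
  (forall (a b : ob A) (f : hom a b),
      vcomp (F2 F (co f)) (phiu F b)
      = vcomp (phic F f (inv f)) (vcomp (hc2 (vid (F1 F f)) (phii F f)) (co (F1 F f)))).

Definition mcomp {A B C : Bigroupoid} (G : MorData B C) (F : MorData A B) : MorData A C :=
  {| F0 := fun a => F0 G (F0 F a);
     F1 := fun a a' f => F1 G (F1 F f);
     F2 := fun a a' f g x => F2 G (F2 F x);
     phic := fun a b c g f => vcomp (F2 G (phic F g f)) (phic G (F1 F g) (F1 F f));
     phiu := fun a => vcomp (F2 G (phiu F a)) (phiu G (F0 F a));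
     phii := fun a b f => vcomp (F2 G (phii F f)) (phii G (F1 F f)) |}.

Definition idcell {B : Bigroupoid} {a b : ob B} {x y : hom a b} (p : x = y) : cell x y :=
  match p in _ = y' return cell x y' with eq_refl => vid x end.

Definition is_identity_cell {B : Bigroupoid} {a b : ob B} {x y : hom a b} (c : cell x y) : Prop :=
  exists p : x = y, c = idcell p.

Definition strict {A B : Bigroupoid} (F : MorData A B) : Prop :=
  (forall (a b c : ob A) (g : hom b c) (f : hom a b), is_identity_cell (phic F g f)) /\
  (forall a : ob A, is_identity_cell (phiu F a)) /\
  (forall (a b : ob A) (f : hom a b), is_identity_cell (phii F f)).

Definition fibration {A B : Bigroupoid} (F : MorData A B) : Prop :=
  (forall (a' : ob A) (x : ob B) (b : hom x (F0 F a')),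
     exists (a0 : ob A) (p : F0 F a0 = x) (f : hom a0 a'),
       match p in _ = x' return hom x' (F0 F a') with eq_refl => F1 F f end = b) /\
  (forall (a a' : ob A) (f' : hom a a') (b : hom (F0 F a) (F0 F a')) (beta : cell b (F1 F f')),
     exists (f : hom a a') (alpha : cell f f') (p : F1 F f = b),
       match p in _ = b' return cell b' (F1 F f') with eq_refl => F2 F alpha end = beta).

Definition cofibration {A B : Bigroupoid} (F : MorData A B) : Prop :=
  (forall a b : ob A, F0 F a = F0 F b -> a = b) /\
  (forall (a a' : ob A) (f g : hom a a'), F1 F f = F1 F g -> f = g).

(** F_{a,a'} : A(a,a') -> B(Fa,Fa') is an equivalence of categories:
    there is a functor K back together with natural isomorphisms
    F K ~= id and id ~= K F (all 2-cells are invertible in a groupoid,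
    so natural transformations are natural isomorphisms). *)
Definition local_equivalence {A B : Bigroupoid} (F : MorData A B) (a a' : ob A) : Prop :=
  exists (K1 : hom (F0 F a) (F0 F a') -> hom a a')
         (K2 : forall u v : hom (F0 F a) (F0 F a'), cell u v -> cell (K1 u) (K1 v))
         (eps : forall u : hom (F0 F a) (F0 F a'), cell (F1 F (K1 u)) u)
         (eta : forall f : hom a a', cell f (K1 (F1 F f))),
    (forall u, K2 u u (vid u) = vid (K1 u)) /\
    (forall u v w (y : cell v w) (x : cell u v), K2 u w (vcomp y x) = vcomp (K2 v w y) (K2 u v x)) /\
    (forall u v (x : cell u v), vcomp (eps v) (F2 F (K2 u v x)) = vcomp x (eps u)) /\
    (forall f g (x : cell f g),
        vcomp (eta g) x = vcomp (K2 (F1 F f) (F1 F g) (F2 F x)) (eta f)).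

Definition weak_equivalence {A B : Bigroupoid} (F : MorData A B) : Prop :=
  (forall x : ob B, exists a' : ob A, inhabited (hom x (F0 F a'))) /\
  (forall a a' : ob A, local_equivalence F a a').

Definition trivial_fibration {A B : Bigroupoid} (F : MorData A B) : Prop :=
  fibration F /\ weak_equivalence F.

(** The middle bigroupoid B has as 0-cells the disjoint union of the 0-cells
    of A and of C; its 1-cells x -> y are the 1-cells of C between the images
    of x and y, together with a formal copy of every 1-cell of A when x and y
    both come from A; its 2-cells are simply the 2-cells of C between the
    images.  All structure (composition, units, inverses, coherence cells) is
    computed in C, so the projection B -> C is a strict morphism that is the
    identity on 2-cells, and adding all 0-cells of C makes it surjective on
    0-cells, hence a trivial fibration.  The inclusion A -> B is injective on
    0- and 1-cells because the copies are formal, and it carries the coherence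
    cells of F. *)

From Stdlib Require Import FunctionalExtensionality.

Section Adjoin.
Variables (C : Bigroupoid) (X : Type) (h0 : X -> ob C).
Variables (E : X -> X -> Type) (e : forall x y, E x y -> hom (h0 x) (h0 y)).

Definition adj_hom (x y : X) : Type := (hom (h0 x) (h0 y) + E x y)%type.

Definition adj_val {x y : X} (u : adj_hom x y) : hom (h0 x) (h0 y) :=
  match u with inl v => v | inr f => e x y f end.

Definition Adjoin : Bigroupoid.
Proof.
  refine {| ob := X;
            hom := adj_hom;
            cell := fun x y u v => cell (adj_val u) (adj_val v);
            vid := fun x y u => vid (adj_val u);
            vcomp := fun x y u v w s t => vcomp s t;
            vinv := fun x y u v s => vinv s;
            hc := fun x y z v u => inl (hc (adj_val v) (adj_val u));
            hc2 := fun x y z v v' u u' t s => hc2 t s;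
            one := fun x => inl (one (h0 x));
            inv := fun x y u => inl (inv (adj_val u));
            inv2 := fun x y u v s => inv2 s;
            assoc := fun w x y z h g f => assoc (adj_val h) (adj_val g) (adj_val f);
            lu := fun x y u => lu (adj_val u);
            ru := fun x y u => ru (adj_val u);
            ev := fun x y u => ev (adj_val u);
            co := fun x y u => co (adj_val u) |}.
  all: intros; cbn.
  all: first [ apply (vcomp_assoc C) | apply (vcomp_id_l C) | apply (vcomp_id_r C)
             | apply (vinv_l C) | apply (vinv_r C) | apply (hc2_id C) | apply (hc2_comp C)
             | apply (inv2_id C) | apply (inv2_comp C) | apply (assoc_nat C)
             | apply (lu_nat C) | apply (ru_nat C) | apply (ev_nat C) | apply (co_nat C)
             | apply (pentagon C) | apply (triangle C) | apply (zigzag C) ].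
Defined.

Definition adjoin_proj : MorData Adjoin C :=
  @Build_MorData Adjoin C h0
    (fun x y u => adj_val u)
    (fun x y u v s => s)
    (fun x y z v u => vid (hc (adj_val v) (adj_val u)))
    (fun x => vid (one (h0 x)))
    (fun x y u => vid (inv (adj_val u))).

Lemma adjoin_proj_morphism : IsMorphism adjoin_proj.
Proof.
  repeat split; intros; cbn;
    rewrite ?(hc2_id C), ?(inv2_id C), ?(vcomp_id_l C), ?(vcomp_id_r C);
    reflexivity.
Qed.

Lemma adjoin_proj_strict : strict adjoin_proj.
Proof. repeat split; intros; exists eq_refl; reflexivity. Qed.

Lemma adjoin_proj_local_equivalence (x y : X) : local_equivalence adjoin_proj x y.
Proof.
  exists (fun u => inl u), (fun u v s => s), (fun u => vid u), (fun f => vid (adj_val f)).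
  repeat split; intros; cbn; rewrite ?(vcomp_id_l C), ?(vcomp_id_r C); reflexivity.
Qed.

Hypothesis h0_surj : forall c : ob C, exists x : X, h0 x = c.

Lemma adjoin_proj_fibration : fibration adjoin_proj.
Proof.
  split.
  - intros y c b; destruct (h0_surj c) as [x <-].
    exists x, eq_refl, (inl b); reflexivity.
  - intros x y f' b beta; exists (inl b), beta, eq_refl; reflexivity.
Qed.

Lemma adjoin_proj_trivial_fibration : trivial_fibration adjoin_proj.
Proof.
  split; [exact adjoin_proj_fibration|].
  split; [|exact adjoin_proj_local_equivalence].
  intros c; destruct (h0_surj c) as [x <-].
  exists x; constructor; exact (one (h0 x)).
Qed.

End Adjoin.

Arguments Adjoin C {X} h0 {E} e.
Arguments adjoin_proj C {X} h0 {E} e.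
Arguments adjoin_proj_trivial_fibration C {X} h0 {E} e h0_surj.

Section Mapping_cylinder.
Variables (A C : Bigroupoid) (F : MorData A C).

Definition cyl_ob0 (x : ob A + ob C) : ob C :=
  match x with inl a => F0 F a | inr c => c end.

Definition cyl_formal (x y : ob A + ob C) : Type :=
  match x, y with inl a, inl a' => hom a a' | _, _ => Empty_set end.

Definition cyl_formal_val (x y : ob A + ob C) :
    cyl_formal x y -> hom (cyl_ob0 x) (cyl_ob0 y) :=
  match x, y return cyl_formal x y -> hom (cyl_ob0 x) (cyl_ob0 y) with
  | inl a, inl a' => fun f => F1 F f
  | inl _, inr _ | inr _, inl _ | inr _, inr _ => fun v => match v with end
  end.

Definition Cylinder : Bigroupoid := Adjoin C cyl_ob0 cyl_formal_val.

Definition cyl_proj : MorData Cylinder C := adjoin_proj C cyl_ob0 cyl_formal_val.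

Definition cyl_incl : MorData A Cylinder :=
  {| F0 := fun a => (inl a : ob Cylinder);
     F1 := fun a a' f => (inr f : @hom Cylinder (inl a) (inl a'));
     F2 := fun a a' f g s => F2 F s;
     phic := fun a b c g f => phic F g f;
     phiu := fun a => phiu F a;
     phii := fun a b f => phii F f |}.

Lemma cyl_incl_morphism : IsMorphism F -> IsMorphism cyl_incl.
Proof. exact (fun HF => HF). Qed.

Lemma cyl_incl_cofibration : cofibration cyl_incl.
Proof. split; intros * Heq; injection Heq; trivial. Qed.

Lemma cyl_proj_surj (c : ob C) : exists x : ob Cylinder, cyl_ob0 x = c.
Proof. exists (inr c); reflexivity. Qed.

Lemma cyl_proj_incl : mcomp cyl_proj cyl_incl = F.
Proof.
  unfold mcomp, cyl_proj, cyl_incl; cbn.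
  destruct F as [f0 f1 f2 pc pu pi]; cbn.
  f_equal; repeat (apply functional_extensionality_dep; intro); apply (vcomp_id_r C).
Qed.

End Mapping_cylinder.

Theorem lemma4p4 (A C : Bigroupoid) (F : MorData A C) :
  IsMorphism F ->
  exists (B : Bigroupoid) (G : MorData A B) (H : MorData B C),
    IsMorphism G /\ IsMorphism H /\
    cofibration G /\
    strict H /\ trivial_fibration H /\
    F = mcomp H G.
Proof.
  intros HF.
  exists (Cylinder A C F), (cyl_incl A C F), (cyl_proj A C F).
  split; [exact (cyl_incl_morphism A C F HF)|].
  split; [apply adjoin_proj_morphism|].
  split; [apply cyl_incl_cofibration|].
  split; [apply adjoin_proj_strict|].
  split; [exact (adjoin_proj_trivial_fibration _ _ _ (cyl_proj_surj A C F))|].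
  symmetry; apply cyl_proj_incl.
Qed.
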